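(* Let $F,G:\mathcal C\rightrightarrows\mathcal D$ be functors between small categories. Their coequalizer $\mathrm{coeq}(F,G)$ in $\mathbf{Cat}$ is the following category: its set of objects is $Q_0$; its morphisms are those of the free category on the reflexive quiver $Q=(Q_0,Q_1)$, subject to the relations $[g]\circ[f]=[h]$ for $[f],[g],[h]\in Q_1$ whenever there exist composable morphisms $f'$, $g'$ of $\mathcal D$ with $[f']=[f]$, $[g']=[g]$ and $[g'\circ f']=[h]$ (i.e. representatives forming the boundary of a $2$-simplex of $N\mathcal D$).
   Context: $Q_0$ is the coequalizer in $\mathbf{Set}$ of the object maps $F_0,G_0:\mathrm{obj}\,\mathcal C\rightrightarrows\mathrm{obj}\,\mathcal D$ (the quotient of $\mathrm{obj}\,\mathcal D$ by the equivalence relation generated by $F(c)\sim G(c)$), and $Q_1$ is the coequalizer in $\mathbf{Set}$ of the morphism maps $F_1,G_1:\mathrm{mor}\,\mathcal C\rightrightarrows\mathrm{mor}\,\mathcal D$; classes are written $[x]$. Source, target and identity maps of $\mathcal D$ descend to make $Q=(Q_0,Q_1)$ a reflexive quiver (vertices $Q_0$, edges $Q_1$, source/target maps $Q_1\to Q_0$, distinguished loops the classes of identities); this is the $1$-truncation of the coequalizer of the nerves $NF,NG:N\mathcal C\rightrightarrows N\mathcal D$ in simplicial sets. The free category on a reflexive quiver has the vertices as objects and finite paths of non-distinguished edges as morphisms (distinguished loops becoming identities), composed by concatenation; ''subject to the relations'' means quotienting by the smallest congruence containing them. *)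

From Stdlib Require Import Relations List ClassicalEpsilon.
Import ListNotations.
Set Implicit Arguments.

Definition quot (T : Type) (R : T -> T -> Prop) : Type :=
  {P : T -> Prop | exists x, P = clos_refl_sym_trans T R x}.
Definition cls {T : Type} (R : T -> T -> Prop) (x : T) : quot R :=
  exist _ (clos_refl_sym_trans T R x) (ex_intro _ x eq_refl).
Definition rep {T : Type} {R : T -> T -> Prop} (q : quot R) : T :=
  proj1_sig (constructive_indefinite_description _ (proj2_sig q)).

Record PreCat : Type := {
  Obj : Type;
  Hom : Obj -> Obj -> Type;
  idm : forall a, Hom a a;
  comp : forall a b c, Hom b c -> Hom a b -> Hom a c
}.
Arguments idm {p} a : rename.
Arguments comp {p a b c} g f : rename.

Definition IsCat (C : PreCat) : Prop :=
  (forall a b (f : Hom C a b), comp (idm b) f = f) /\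
  (forall a b (f : Hom C a b), comp f (idm a) = f) /\
  (forall a b c d (f : Hom C a b) (g : Hom C b c) (h : Hom C c d),
      comp h (comp g f) = comp (comp h g) f).

Record PreFunctor (C D : PreCat) : Type := {
  fobj : Obj C -> Obj D;
  fmap : forall a b, Hom C a b -> Hom D (fobj a) (fobj b)
}.
Arguments fobj {C D} p _.
Arguments fmap {C D} p {a b} _.

Definition IsFunctor {C D : PreCat} (F : PreFunctor C D) : Prop :=
  (forall a, fmap F (idm a) = idm (fobj F a)) /\
  (forall a b c (f : Hom C a b) (g : Hom C b c),
      fmap F (comp g f) = comp (fmap F g) (fmap F f)).

Definition Fcomp {C D E : PreCat} (G : PreFunctor D E) (F : PreFunctor C D)
  : PreFunctor C E :=
  {| fobj := fun a => fobj G (fobj F a);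
     fmap := fun a b f => fmap G (fmap F f) |}.

Definition Mor (C : PreCat) : Type := {a : Obj C & {b : Obj C & Hom C a b}}.
Definition mk {C : PreCat} {a b : Obj C} (f : Hom C a b) : Mor C :=
  existT _ a (existT _ b f).
Definition msrc {C : PreCat} (m : Mor C) : Obj C := projT1 m.
Definition mtgt {C : PreCat} (m : Mor C) : Obj C := projT1 (projT2 m).
Definition midm {C : PreCat} (a : Obj C) : Mor C := mk (idm a).

Definition mor {C D : PreCat} (F : PreFunctor C D) (m : Mor C) : Mor D :=
  mk (fmap F (projT2 (projT2 m))).

(* equality of functors (equality of their morphism maps; this determines
   the object maps via identities) *)
Definition feq {C D : PreCat} (F G : PreFunctor C D) : Prop :=
  forall m : Mor C, mor F m = mor G m.

Definition IsCoequalizer {C D : PreCat} (F G : PreFunctor C D)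
  (K : PreCat) (P : PreFunctor D K) : Prop :=
  IsCat K /\ IsFunctor P /\ feq (Fcomp P F) (Fcomp P G) /\
  forall (E : PreCat) (H : PreFunctor D E),
    IsCat E -> IsFunctor H -> feq (Fcomp H F) (Fcomp H G) ->
    exists U : PreFunctor K E,
      IsFunctor U /\ feq (Fcomp U P) H /\
      forall U' : PreFunctor K E, IsFunctor U' -> feq (Fcomp U' P) H -> feq U' U.

Section Construction.
Variables (C D : PreCat) (F G : PreFunctor C D).

(* Q_0 : coequalizer in Set of the object maps *)
Definition R0 (x y : Obj D) : Prop := exists c, x = fobj F c /\ y = fobj G c.
Definition Q0 : Type := quot R0.
(* Q_1 : coequalizer in Set of the morphism maps *)
Definition R1 (x y : Mor D) : Prop := exists m, x = mor F m /\ y = mor G m.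
Definition Q1 : Type := quot R1.

Definition qedge (e : Q1) (a b : Q0) : Prop :=
  exists m : Mor D, cls R1 m = e /\ cls R0 (msrc m) = a /\ cls R0 (mtgt m) = b.

(* finite paths of edges of Q from a to b (edges listed from the source) *)
Fixpoint qvalid (a : Q0) (l : list Q1) (b : Q0) : Prop :=
  match l with
  | nil => a = b
  | e :: l' => exists c, qedge e a c /\ qvalid c l' b
  end.

(* generating relations: distinguished loops are identities (free category
   on the reflexive quiver), and [g] o [f] = [h] for 2-simplex boundaries *)
Inductive qrule : list Q1 -> list Q1 -> Prop :=
| qrule_id : forall (e : Q1) (x : Obj D), cls R1 (midm x) = e -> qrule [e] []
| qrule_comp : forall (e1 e2 e3 : Q1) (a b c : Obj D)
                 (f : Hom D a b) (g : Hom D b c),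
    cls R1 (mk f) = e1 -> cls R1 (mk g) = e2 -> cls R1 (mk (comp g f)) = e3 ->
    qrule [e1; e2] [e3].

(* one rewriting step inside a path: generates the smallest congruence *)
Inductive qstep : list Q1 -> list Q1 -> Prop :=
| qstep_intro : forall l1 L R l2, qrule L R -> qstep (l1 ++ L ++ l2) (l1 ++ R ++ l2).

Definition VPath (a b : Q0) : Type := {l : list Q1 | qvalid a l b}.
Definition CHom (a b : Q0) : Type :=
  quot (fun p q : VPath a b => qstep (proj1_sig p) (proj1_sig q)).

Lemma qvalid_app : forall (l : list Q1) (a b c : Q0) (l' : list Q1),
  qvalid a l b -> qvalid b l' c -> qvalid a (l ++ l') c.
Proof.
  induction l as [|e l IH]; simpl; intros a b c l' H1 H2.
  - subst; exact H2.
  - destruct H1 as [d [He Hl]]. exists d. split; [exact He|]. eapply IH; eauto.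
Qed.

Definition cid (a : Q0) : CHom a a := cls _ (exist _ nil eq_refl : VPath a a).

Definition ccomp (a b c : Q0) (q : CHom b c) (p : CHom a b) : CHom a c :=
  cls _ (exist _ (proj1_sig (rep p) ++ proj1_sig (rep q))
           (@qvalid_app _ a b c _ (proj2_sig (rep p)) (proj2_sig (rep q))) : VPath a c).

Definition coeqCat : PreCat :=
  {| Obj := Q0; Hom := CHom; idm := cid; comp := ccomp |}.

Definition proj_edge_valid (a b : Obj D) (f : Hom D a b) :
  qvalid (cls R0 a) [cls R1 (mk f)] (cls R0 b) :=
  ex_intro _ (cls R0 b)
    (conj (ex_intro _ (mk f) (conj eq_refl (conj eq_refl eq_refl))) eq_refl).

Definition coeqProj : PreFunctor D coeqCat :=
  {| fobj := fun x => cls R0 x : Obj coeqCat;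
     fmap := fun a b f =>
       cls _ (exist _ [cls R1 (mk f)] (@proj_edge_valid a b f)
              : VPath (cls R0 a) (cls R0 b)) |}.

End Construction.

Arguments IsCoequalizer {C D} F G K P.

(** Every morphism of coeq(F,G) is a class of paths of edges, and every edge is the image
    of a morphism of D; hence a functor out of coeq(F,G) is determined by its composite
    with the projection. Conversely, if a functor H : D -> E satisfies HF = HG, then H is
    constant on the classes of Q_0 and Q_1, so each path of edges has a well-defined
    composite in E; functoriality of H makes this composite invariant under both kinds of
    generating relations, and it therefore defines the factorisation of H. *)
From Stdlib Require Import Relations List ClassicalEpsilon FunctionalExtensionality
  PropExtensionality ProofIrrelevance Eqdep.
Import ListNotations.
Set Implicit Arguments.

Notation crst := clos_refl_sym_trans.
Notation path_rel a b := (fun p q : VPath a b => qstep (proj1_sig p) (proj1_sig q)).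

Section Quotient.
Variables (T : Type) (R : T -> T -> Prop).

Lemma cls_eq x y : crst T R x y -> cls R x = cls R y.
Proof.
  intro Hxy. apply subset_eq_compat, functional_extensionality; intro z.
  apply propositional_extensionality; split; intro Hz.
  - exact (rst_trans _ _ _ _ _ (rst_sym _ _ _ _ Hxy) Hz).
  - exact (rst_trans _ _ _ _ _ Hxy Hz).
Qed.

Lemma cls_eq_inv x y : cls R x = cls R y -> crst T R x y.
Proof.
  intro Hxy. apply (f_equal (@proj1_sig _ _)) in Hxy. simpl in Hxy.
  rewrite Hxy. apply rst_refl.
Qed.

Lemma cls_rep (q : quot R) : cls R (rep q) = q.
Proof.
  destruct q as [P HP]. unfold rep; simpl.
  destruct (constructive_indefinite_description _ HP) as [x Hx]; simpl.
  apply subset_eq_compat. symmetry; exact Hx.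
Qed.

Lemma rep_cls x : crst T R (rep (cls R x)) x.
Proof. apply cls_eq_inv. rewrite cls_rep. reflexivity. Qed.

Lemma crst_invariant (U : Type) (f : T -> U) :
  (forall x y, R x y -> f x = f y) -> forall x y, crst T R x y -> f x = f y.
Proof. intros Hf x y Hxy; induction Hxy; eauto; congruence. Qed.

Lemma crst_map (U : Type) (S : U -> U -> Prop) (f : T -> U) :
  (forall x y, R x y -> S (f x) (f y)) ->
  forall x y, crst T R x y -> crst U S (f x) (f y).
Proof.
  intros Hf x y Hxy; induction Hxy.
  - apply rst_step; auto.
  - apply rst_refl.
  - apply rst_sym; auto.
  - eapply rst_trans; eauto.
Qed.

End Quotient.

Section Morphisms.
Variable K : PreCat.

Lemma mk_ends (x y x' y' : Obj K) (h : Hom K x y) (h' : Hom K x' y') :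
  mk h = mk h' -> x = x' /\ y = y'.
Proof. intro Hh. exact (conj (f_equal msrc Hh) (f_equal mtgt Hh)). Qed.

Lemma mk_inj (x y : Obj K) (h h' : Hom K x y) : mk h = mk h' -> h = h'.
Proof. intro Hh. apply inj_pair2 in Hh. apply inj_pair2 in Hh. exact Hh. Qed.

Lemma mk_comp (a b c a' b' c' : Obj K) (f : Hom K a b) (g : Hom K b c)
  (f' : Hom K a' b') (g' : Hom K b' c') :
  mk f = mk f' -> mk g = mk g' -> mk (comp g f) = mk (comp g' f').
Proof.
  intros Hf Hg. destruct (mk_ends Hf) as [-> ->]. destruct (mk_ends Hg) as [_ ->].
  apply mk_inj in Hf; apply mk_inj in Hg. subst; reflexivity.
Qed.

End Morphisms.

Lemma feq_fobj (K L : PreCat) (U V : PreFunctor K L) :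
  feq U V -> forall a, fobj U a = fobj V a.
Proof. intros UV a. exact (f_equal msrc (UV (midm a))). Qed.

Section CoeqCat.
Variables (C D : PreCat) (F G : PreFunctor C D).

Lemma vpath_eq a b (v w : VPath (F:=F) (G:=G) a b) : proj1_sig v = proj1_sig w -> v = w.
Proof. destruct v, w; apply subset_eq_compat. Qed.

Definition vapp a b c (v : VPath (F:=F) (G:=G) a b) (w : VPath b c) : VPath a c :=
  exist _ (proj1_sig v ++ proj1_sig w) (qvalid_app _ _ _ _ _ (proj2_sig v) (proj2_sig w)).

Lemma vapp_crst a b c (v v' : VPath a b) (w w' : VPath b c) :
  crst _ (path_rel a b) v v' -> crst _ (path_rel b c) w w' ->
  crst _ (path_rel a c) (vapp v w) (vapp v' w').
Proof.
  intros Hv Hw. apply rst_trans with (vapp v' w).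
  - apply (crst_map (R := path_rel a b) (path_rel a c) (fun v => vapp v w)); [|exact Hv].
    intros [x px] [y py]; cbn; intros [l1 L R l2 HLR].
    rewrite <- !app_assoc. apply qstep_intro; exact HLR.
  - apply (crst_map (R := path_rel b c) (path_rel a c) (fun w => vapp v' w)); [|exact Hw].
    intros [x px] [y py]; cbn; intros [l1 L R l2 HLR].
    rewrite !app_assoc, <- (app_assoc _ L l2), <- (app_assoc _ R l2).
    apply qstep_intro; exact HLR.
Qed.

Lemma ccomp_cls a b c (v : VPath a b) (w : VPath b c) :
  ccomp (cls _ w : CHom b c) (cls _ v : CHom a b) = cls _ (vapp v w).
Proof. apply cls_eq, vapp_crst; apply rep_cls. Qed.

Lemma coeqCat_isCat : IsCat (coeqCat F G).
Proof.
  split; [|split]; simpl.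
  - intros a b p. rewrite <- (cls_rep p). unfold cid. rewrite ccomp_cls.
    f_equal. apply vpath_eq, app_nil_r.
  - intros a b p. rewrite <- (cls_rep p). unfold cid. rewrite ccomp_cls.
    f_equal. apply vpath_eq; reflexivity.
  - intros a b c d p q r. rewrite <- (cls_rep p), <- (cls_rep q), <- (cls_rep r).
    rewrite !ccomp_cls. f_equal. apply vpath_eq; symmetry; apply app_assoc.
Qed.

Lemma coeqProj_isFunctor : IsFunctor (coeqProj F G).
Proof.
  split; simpl.
  - intro a. apply cls_eq, rst_step; simpl.
    apply (qstep_intro [] (L := [cls (R1 F G) (mk (idm a))]) (R := []) []).
    eapply qrule_id; reflexivity.
  - intros a b c f g. rewrite ccomp_cls. apply cls_eq, rst_sym, rst_step; simpl.
    apply (qstep_intro [] (L := [cls (R1 F G) (mk f); cls (R1 F G) (mk g)])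
             (R := [cls (R1 F G) (mk (comp g f))]) []).
    eapply qrule_comp; reflexivity.
Qed.

Lemma mk_cls_path (a b a' b' : Q0 F G) l l' (pf : qvalid a l b) (pf' : qvalid a' l' b') :
  a = a' -> b = b' -> l = l' ->
  @mk (coeqCat F G) a b (cls _ (exist _ l pf : VPath a b)) =
  @mk (coeqCat F G) a' b' (cls _ (exist _ l' pf' : VPath a' b')).
Proof. intros -> -> ->. rewrite (proof_irrelevance _ pf pf'). reflexivity. Qed.

Lemma coeqProj_coequalizes : feq (Fcomp (coeqProj F G) F) (Fcomp (coeqProj F G) G).
Proof.
  intros [a [b f]]. apply mk_cls_path.
  - apply cls_eq, rst_step. exists a; split; reflexivity.
  - apply cls_eq, rst_step. exists b; split; reflexivity.
  - f_equal. apply cls_eq, rst_step. exists (mk f); split; reflexivity.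
Qed.

Lemma edge_in_image (a c : Q0 F G) e (pf : qvalid a [e] c) :
  exists m : Mor D, @mk (coeqCat F G) a c (cls _ (exist _ [e] pf : VPath a c)) =
                    mor (coeqProj F G) m.
Proof.
  pose proof pf as [c' [[[x [y f]] [<- [<- <-]]] Hc]]; simpl in Hc; subst c.
  exists (mk f). apply mk_cls_path; reflexivity.
Qed.

Lemma cls_cons_path (a b : Q0 F G) e l (pf : qvalid a (e :: l) b) :
  exists c (pe : qvalid a [e] c) (pl : qvalid c l b),
    (cls _ (exist _ (e :: l) pf : VPath a b) : CHom a b) =
    ccomp (cls _ (exist _ l pl : VPath c b)) (cls _ (exist _ [e] pe : VPath a c)).
Proof.
  pose proof pf as [c [He pl]].
  exists c, (ex_intro _ c (conj He eq_refl)), pl.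
  rewrite ccomp_cls. f_equal. apply vpath_eq; reflexivity.
Qed.

Lemma coeq_functor_ext (K : PreCat) (U V : PreFunctor (coeqCat F G) K) :
  IsFunctor U -> IsFunctor V ->
  feq (Fcomp U (coeqProj F G)) (Fcomp V (coeqProj F G)) -> feq U V.
Proof.
  intros [Uid Ucomp] [Vid Vcomp] UV.
  assert (UVobj : forall a, fobj U a = fobj V a).
  { intro a. rewrite <- (cls_rep a). exact (feq_fobj UV (rep a)). }
  assert (UVpath : forall l (a b : Q0 F G) (pf : qvalid a l b),
             mor U (@mk (coeqCat F G) a b (cls _ (exist _ l pf : VPath a b))) =
             mor V (@mk (coeqCat F G) a b (cls _ (exist _ l pf : VPath a b)))).
  { induction l as [|e l IH]; intros a b pf.
    - simpl in pf. subst b.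
      change (mk (fmap U (@idm (coeqCat F G) a)) = mk (fmap V (@idm (coeqCat F G) a))).
      rewrite Uid, Vid, UVobj. reflexivity.
    - destruct (cls_cons_path pf) as [c [pe [pl ->]]].
      change (mk (fmap U (@comp (coeqCat F G) _ _ _ (cls _ (exist _ l pl : VPath c b))
                                (cls _ (exist _ [e] pe : VPath a c)))) =
              mk (fmap V (@comp (coeqCat F G) _ _ _ (cls _ (exist _ l pl : VPath c b))
                                (cls _ (exist _ [e] pe : VPath a c))))).
      rewrite Ucomp, Vcomp. apply mk_comp; [|apply IH].
      destruct (edge_in_image pe) as [m Hm].
      change (mor U (@mk (coeqCat F G) a c (cls _ (exist _ [e] pe : VPath a c))) =
              mor V (@mk (coeqCat F G) a c (cls _ (exist _ [e] pe : VPath a c)))).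
      rewrite Hm. exact (UV m). }
  intros [a [b p]]. change (mor U (mk p) = mor V (mk p)).
  rewrite <- (cls_rep p). destruct (rep p) as [l pf]. apply UVpath.
Qed.

End CoeqCat.

Section Lift.
Variables (C D : PreCat) (F G : PreFunctor C D) (E : PreCat) (H : PreFunctor D E).
Hypotheses (HE : IsCat E) (HH : IsFunctor H) (HFG : feq (Fcomp H F) (Fcomp H G)).

Lemma fobj_R0_invariant x y : crst _ (R0 F G) x y -> fobj H x = fobj H y.
Proof.
  apply crst_invariant. intros x' y' [c [-> ->]]. exact (feq_fobj HFG c).
Qed.

Lemma mor_R1_invariant m m' : crst _ (R1 F G) m m' -> mor H m = mor H m'.
Proof. apply crst_invariant. intros x y [m0 [-> ->]]. apply HFG. Qed.

Lemma mk_fmap_cls a b (f : Hom D a b) a' b' (f' : Hom D a' b') :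
  cls (R1 F G) (mk f) = cls (R1 F G) (mk f') -> mk (fmap H f) = mk (fmap H f').
Proof. intro Hff'. exact (mor_R1_invariant (cls_eq_inv Hff')). Qed.

(* [path_value l h]: [h] is the composite of the [H]-images of representatives of the
   edges of [l]; by [mor_R1_invariant] it does not depend on the representatives. *)
Inductive path_value : forall x y : Obj E, list (Q1 F G) -> Hom E x y -> Prop :=
| path_value_nil x : path_value x x [] (idm x)
| path_value_cons a b (f : Hom D a b) l y (h : Hom E (fobj H b) y) :
    path_value _ _ l h ->
    path_value _ _ (cls (R1 F G) (mk f) :: l) (comp h (fmap H f)).
Arguments path_value {x y} l h.

Lemma path_value_mk x y l (h : Hom E x y) x' y' (h' : Hom E x' y') :
  path_value l h -> mk h = mk h' -> path_value l h'.
Proof.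
  intros Hh Hhh'. destruct (mk_ends Hhh') as [<- <-]. apply mk_inj in Hhh'.
  subst; exact Hh.
Qed.

Lemma path_value_nil_inv x y (h : Hom E x y) : path_value [] h -> mk h = midm x.
Proof. intro Hh. remember [] as l eqn:El. destruct Hh; [reflexivity | discriminate]. Qed.

Lemma path_value_cons_inv x y e l (h : Hom E x y) : path_value (e :: l) h ->
  exists a b (f : Hom D a b) (h0 : Hom E (fobj H b) y),
    cls (R1 F G) (mk f) = e /\ path_value l h0 /\ mk h = mk (comp h0 (fmap H f)).
Proof.
  intro Hh. remember (e :: l) as l0 eqn:El. destruct Hh; [discriminate|].
  injection El as <- <-. exists a, b, f, h. auto.
Qed.

Lemma path_value_unique_mk x y l (h : Hom E x y) : path_value l h ->
  forall x' y' (h' : Hom E x' y'), path_value l h' -> x = x' -> mk h = mk h'.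
Proof.
  induction 1 as [x|a b f l y h Hh IH]; intros x' y' h' Hh' <-.
  - symmetry. exact (path_value_nil_inv Hh').
  - destruct (path_value_cons_inv Hh') as [a' [b' [f' [h0 [Hf' [Hh0 ->]]]]]].
    assert (Hff' : mk (fmap H f) = mk (fmap H f')) by (apply mk_fmap_cls; congruence).
    apply mk_comp; [exact Hff'|].
    exact (IH _ _ _ Hh0 (proj2 (mk_ends Hff'))).
Qed.

Lemma path_value_unique x y l (h h' : Hom E x y) :
  path_value l h -> path_value l h' -> h = h'.
Proof. intros Hh Hh'. apply mk_inj. exact (path_value_unique_mk Hh Hh' eq_refl). Qed.

Lemma path_value_edge {a b} (f : Hom D a b) : path_value [cls (R1 F G) (mk f)] (fmap H f).
Proof.
  destruct HE as [Hidl _]. rewrite <- (Hidl _ _ (fmap H f)).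
  apply path_value_cons, path_value_nil.
Qed.

Lemma path_value_app x y l1 (h1 : Hom E x y) : path_value l1 h1 ->
  forall z l2 (h2 : Hom E y z), path_value l2 h2 -> path_value (l1 ++ l2) (comp h2 h1).
Proof.
  destruct HE as [_ [Hidr Hassoc]].
  induction 1; intros z l2 h2 Hh2; simpl.
  - rewrite Hidr. exact Hh2.
  - rewrite Hassoc. apply path_value_cons; auto.
Qed.

Lemma path_value_split l1 l2 x z (h : Hom E x z) : path_value (l1 ++ l2) h ->
  exists y (h1 : Hom E x y) (h2 : Hom E y z),
    path_value l1 h1 /\ path_value l2 h2 /\ h = comp h2 h1.
Proof.
  destruct HE as [_ [Hidr Hassoc]].
  revert x h; induction l1 as [|e l1 IH]; intros x h Hh; simpl in Hh.
  - exists x, (idm x), h. rewrite Hidr. split; [apply path_value_nil | auto].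
  - destruct (path_value_cons_inv Hh) as [a [b [f [h0 [<- [Hh0 Hmk]]]]]].
    destruct (mk_ends Hmk) as [-> _]. apply mk_inj in Hmk. subst h.
    destruct (IH _ _ Hh0) as [y [h1 [h2 [Hh1 [Hh2 ->]]]]].
    exists y, (comp h1 (fmap H f)), h2.
    split; [apply path_value_cons; exact Hh1 | split; [exact Hh2 | symmetry; apply Hassoc]].
Qed.

Lemma path_value_src a b (f : Hom D a b) l x y (h : Hom E x y) :
  path_value (cls (R1 F G) (mk f) :: l) h -> x = fobj H a.
Proof.
  intro Hh. destruct (path_value_cons_inv Hh) as [a' [b' [f' [h0 [Hf' [_ Hmk]]]]]].
  rewrite (proj1 (mk_ends Hmk)). exact (proj1 (mk_ends (mk_fmap_cls Hf'))).
Qed.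

Lemma path_value_rule L R x y (h : Hom E x y) :
  qrule L R -> path_value L h -> path_value R h.
Proof.
  destruct HH as [Hid Hcomp].
  intros [e x0 <- | e1 e2 e3 a b c f g <- <- <-] Hh.
  - apply (path_value_mk (path_value_nil (fobj H x0))).
    rewrite <- Hid. symmetry.
    exact (path_value_unique_mk Hh (path_value_edge (idm x0)) (path_value_src Hh)).
  - apply (path_value_mk (path_value_edge (comp g f))).
    rewrite Hcomp. symmetry.
    exact (path_value_unique_mk Hh (path_value_app (path_value_edge f) (path_value_edge g))
             (path_value_src Hh)).
Qed.

Lemma path_value_step l l' x y (h : Hom E x y) :
  qstep l l' -> path_value l h -> path_value l' h.
Proof.
  intros [l1 L R l2 HLR] Hh.
  destruct (path_value_split l1 (L ++ l2) Hh) as [y1 [h1 [h2 [Hh1 [Hh2 ->]]]]].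
  destruct (path_value_split L l2 Hh2) as [y2 [h3 [h4 [Hh3 [Hh4 ->]]]]].
  apply path_value_app; [exact Hh1|]. apply path_value_app; [|exact Hh4].
  exact (path_value_rule HLR Hh3).
Qed.

Definition lift_obj (q : Q0 F G) : Obj E := fobj H (rep q).

Lemma lift_obj_cls x : lift_obj (cls (R0 F G) x) = fobj H x.
Proof. apply fobj_R0_invariant, rep_cls. Qed.

Lemma path_value_exists l : forall a b, qvalid a l b ->
  exists h : Hom E (lift_obj a) (lift_obj b), path_value l h.
Proof.
  induction l as [|e l IH]; simpl; intros a b Hab.
  - subst b. exists (idm _). apply path_value_nil.
  - destruct Hab as [c [[[a0 [b0 f]] [<- [<- <-]]] Hl]].
    destruct (IH _ _ Hl) as [h Hh]. simpl in *.
    revert h Hh. rewrite !lift_obj_cls. intros h Hh.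
    exists (comp h (fmap H f)). apply path_value_cons; exact Hh.
Qed.

Definition lift_hom a b (v : VPath (F:=F) (G:=G) a b) : Hom E (lift_obj a) (lift_obj b) :=
  proj1_sig (constructive_indefinite_description _ (path_value_exists _ _ _ (proj2_sig v))).

Lemma lift_hom_spec a b (v : VPath a b) : path_value (proj1_sig v) (lift_hom v).
Proof.
  unfold lift_hom. destruct (constructive_indefinite_description _ _) as [h Hh]. exact Hh.
Qed.

Lemma lift_hom_crst a b (v w : VPath a b) :
  crst _ (path_rel a b) v w -> lift_hom v = lift_hom w.
Proof.
  apply crst_invariant. intros v' w' Hvw.
  exact (path_value_unique (path_value_step Hvw (lift_hom_spec v')) (lift_hom_spec w')).
Qed.

Definition coeqLift : PreFunctor (coeqCat F G) E :=
  @Build_PreFunctor (coeqCat F G) E lift_obj (fun a b (p : CHom a b) => lift_hom (rep p)).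

Lemma coeqLift_cls a b (v : VPath a b) : fmap coeqLift (cls _ v : CHom a b) = lift_hom v.
Proof. apply lift_hom_crst, rep_cls. Qed.

Lemma coeqLift_isFunctor : IsFunctor coeqLift.
Proof.
  split.
  - intro a. change (fmap coeqLift (cls _ (exist _ [] eq_refl : VPath a a)) = idm (lift_obj a)).
    rewrite coeqLift_cls. apply (path_value_unique (lift_hom_spec _)), path_value_nil.
  - intros a b c p q. simpl Hom in *.
    rewrite <- (cls_rep p), <- (cls_rep q). generalize (rep p) (rep q); clear p q; intros v w.
    change (fmap coeqLift (ccomp (cls _ w) (cls _ v)) =
            comp (fmap coeqLift (cls _ w : CHom b c)) (fmap coeqLift (cls _ v : CHom a b))).
    rewrite ccomp_cls, !coeqLift_cls.
    apply (path_value_unique (lift_hom_spec _)), path_value_app; apply lift_hom_spec.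
Qed.

Lemma coeqLift_factors : feq (Fcomp coeqLift (coeqProj F G)) H.
Proof.
  intros [a [b f]]. change (mk (fmap coeqLift (fmap (coeqProj F G) f)) = mk (fmap H f)).
  simpl fmap at 2. rewrite coeqLift_cls.
  apply (path_value_unique_mk (lift_hom_spec _)); [apply path_value_edge | apply lift_obj_cls].
Qed.

End Lift.

Theorem mainTheorem17 (C D : PreCat) (F G : PreFunctor C D) :
  IsCat C -> IsCat D -> IsFunctor F -> IsFunctor G ->
  IsCoequalizer F G (coeqCat F G) (coeqProj F G).
Proof.
  intros _ _ _ _.
  split; [exact (coeqCat_isCat F G)|].
  split; [exact (coeqProj_isFunctor F G)|].
  split; [exact (coeqProj_coequalizes F G)|].
  intros E H HE HH HFG.
  pose proof (coeqLift_isFunctor HE HH HFG) as lift_functor.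
  pose proof (coeqLift_factors HE HH HFG) as lift_factors.
  exists (coeqLift HFG). split; [exact lift_functor|]. split; [exact lift_factors|].
  intros U HU HUH. apply coeq_functor_ext; [exact HU | exact lift_functor |].
  intro m. exact (eq_trans (HUH m) (eq_sym (lift_factors m))).
Qed.
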